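(* For every integer $i\ge0$ and generic $q,a,b,\kappa\in\mathbb C$, $$\sum_{j=0}^{i}\varphi_{q,a,b,\kappa}(j\mid i)=1.$$
   Context: $(a;q)_k=\prod_{m=0}^{k-1}(1-q^ma)$ for $k\ge0$. For $q,a,b,\kappa\in\mathbb C$ and integers $i,j\ge0$, $$\varphi_{q,a,b,\kappa}(j\mid i)=a^j\frac{\mathbf 1_{j\le i}(q;q)_i}{(q;q)_j(q;q)_{i-j}}\frac{(b/a;q)_j(a;q)_{i-j}}{(b;q)_i}\frac{(q^ib\kappa;q)_{i-j}(q^{i-j+1}\kappa;q)_j}{(q^{i-j}a\kappa;q)_{i-j}(q^{2i-2j+1}a\kappa;q)_j}.$$ *)

From HB Require Import structures.
From mathcomp Require Import all_boot all_order all_algebra.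
Set Implicit Arguments. Unset Strict Implicit. Unset Printing Implicit Defensive.
Import Order.TTheory GRing.Theory Num.Theory.
Local Open Scope ring_scope.

Definition qpoch (F : ringType) (a q : F) (k : nat) : F :=
  \prod_(m < k) (1 - q ^+ m * a).

Definition phi (F : fieldType) (q a b kappa : F) (j i : nat) : F :=
  a ^+ j *
  (if (j <= i)%N then
     (qpoch q q i / (qpoch q q j * qpoch q q (i - j)))
     * (qpoch (b / a) q j * qpoch a q (i - j) / qpoch b q i)
     * (qpoch (q ^+ i * b * kappa) q (i - j) * qpoch (q ^+ (i - j).+1 * kappa) q j
        / (qpoch (q ^+ (i - j) * a * kappa) q (i - j)
           * qpoch (q ^+ (2 * i - 2 * j).+1 * a * kappa) q j))
   else 0).

(* Write F(j, i) := phi(j | i). With G := [cert] below, (F, G) is a Wilf-Zeilberger pair: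
   F(j, i+1) - F(j, i) = G(i, j+1) - G(i, j) for j <= i.  Summing over j <= i telescopes to
   G(i, i+1) - G(i, 0) = -F(i+1, i+1), so the row sums of F do not depend on i, and the row
   i = 0 is phi(0 | 0) = 1.  Once the q-Pochhammer symbols of the four terms are split into
   common pieces, each instance of the WZ identity is a rational identity in q, q^j, q^(i-j),
   a, b, kappa, checked by [field]; the genericity hypotheses make its denominators nonzero. *)

From HB Require Import structures.
From mathcomp Require Import all_boot all_order all_algebra.
From mathcomp Require Import ring zify.
Set Implicit Arguments. Unset Strict Implicit. Unset Printing Implicit Defensive.
Import Order.TTheory GRing.Theory Num.Theory.
Local Open Scope ring_scope.

Section QProd.
Variables (F : fieldType) (q : F).

Definition qprod (x : F) (lo hi : nat) : F := \prod_(lo <= r < hi) (1 - q ^+ r * x).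

Lemma qprod_cat x lo mid hi :
  (lo <= mid <= hi)%N -> qprod x lo hi = qprod x lo mid * qprod x mid hi.
Proof. by case/andP=> lo_mid mid_hi; rewrite /qprod (big_cat_nat lo_mid mid_hi). Qed.

Lemma qprod_nil x lo hi : (hi <= lo)%N -> qprod x lo hi = 1.
Proof. by move=> hi_lo; rewrite /qprod big_geq. Qed.

Lemma qprodnn x lo : qprod x lo lo = 1.
Proof. exact: qprod_nil. Qed.

Lemma qprod1 x lo : qprod x lo lo.+1 = 1 - q ^+ lo * x.
Proof. by rewrite /qprod big_nat1. Qed.

Lemma qprodSr x lo hi :
  (lo <= hi)%N -> qprod x lo hi.+1 = qprod x lo hi * (1 - q ^+ hi * x).
Proof. by move=> lo_hi; rewrite (@qprod_cat x lo hi) ?qprod1 // lo_hi leqnSn. Qed.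

Lemma qprodSr2 x lo hi : (lo <= hi)%N ->
  qprod x lo hi.+2 = qprod x lo hi * (1 - q ^+ hi * x) * (1 - q ^+ hi.+1 * x).
Proof. by move=> lo_hi; rewrite !qprodSr // leqW. Qed.

Lemma qprodSl x lo hi :
  (lo < hi)%N -> qprod x lo hi = (1 - q ^+ lo * x) * qprod x lo.+1 hi.
Proof. by move=> lo_hi; rewrite (@qprod_cat x lo lo.+1) ?qprod1 // leqnSn lo_hi. Qed.

Lemma qprod_shift2 x lo hi :
  (1 - q ^+ lo * x) * (1 - q ^+ lo.+1 * x) != 0 -> (lo <= hi)%N ->
  qprod x lo.+2 hi.+2 = qprod x lo hi * (1 - q ^+ hi * x) * (1 - q ^+ hi.+1 * x)
                        / ((1 - q ^+ lo * x) * (1 - q ^+ lo.+1 * x)).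
Proof.
move=> nz lo_hi; apply: (canRL (mulfK nz)); have lo_hiS : (lo <= hi.+1)%N by apply: leqW.
rewrite -!qprodSr // (@qprodSl x lo) // (@qprodSl x lo.+1) //.
by rewrite mulrC !mulrA.
Qed.

Lemma qpoch_qprod x s t : qpoch (q ^+ s * x) q t = qprod x s (s + t).
Proof.
elim: t => [|t IHt]; first by rewrite /qpoch big_ord0 addn0 qprod_nil.
by rewrite /qpoch big_ord_recr /= -/(qpoch _ _ _) IHt addnS qprodSr ?leq_addr // mulrA -exprD addnC.
Qed.

Lemma qpoch_qprod0 x t : qpoch x q t = qprod x 0 t.
Proof. by rewrite -(qpoch_qprod x 0 t) expr0 mul1r. Qed.

Lemma qpoch_qq t : qpoch q q t = qprod 1 1 t.+1.
Proof. by rewrite -(qpoch_qprod 1 1 t) expr1 mulr1. Qed.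

Lemma qprod_neq0P x lo hi :
  reflect (forall r, (lo <= r < hi)%N -> 1 - q ^+ r * x != 0) (qprod x lo hi != 0).
Proof.
rewrite /qprod prodf_seq_neq0; apply: (iffP allP) => nz r; last first.
  by rewrite mem_index_iota => /nz.
by move=> r_in; apply: nz; rewrite mem_index_iota.
Qed.

End QProd.

(* [lia] becomes very slow in contexts with many [_ != 0] facts, hence the [clear]. *)
Ltac qprod_neq0_from H :=
  lazymatch goal with
  | |- is_true (qprod _ _ _ _ != 0) => apply/qprod_neq0P => ? ?; apply: H
  | |- _ => apply: H
  end;
  repeat match goal with h : is_true (_ != 0) |- _ => clear h end; lia.

Section PhiSum.
Variables (F : fieldType) (q a b k : F).

(* [a != 0] and the nonvanishing of all denominators of phi(j | i') for j <= i' <= i. *)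
Definition generic i : bool :=
  [&& a != 0, qprod q 1 1 i.+1 != 0, qprod q b 0 i != 0 & qprod q (a * k) 1 (i + i) != 0].

Lemma genericW i : generic i.+1 -> generic i.
Proof.
case/and4P=> a0 /qprod_neq0P Hq /qprod_neq0P Hb /qprod_neq0P Hak.
by apply/and4P; split=> //; apply/qprod_neq0P=> r r_in; [apply: Hq | apply: Hb | apply: Hak]; lia.
Qed.

Definition phi_jn j n : F :=
  a ^+ j * (qprod q 1 1 (j + n).+1 / (qprod q 1 1 j.+1 * qprod q 1 1 n.+1))
  * (qprod q (b / a) 0 j * qprod q a 0 n / qprod q b 0 (j + n))
  * (qprod q (b * k) (j + n) (j + n + n) * qprod q k n.+1 (n.+1 + j)
     / (qprod q (a * k) n (n + n) * qprod q (a * k) (n + n).+1 ((n + n).+1 + j))).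

Lemma phi_jnE j n : phi q a b k j (j + n) = phi_jn j n.
Proof.
rewrite /phi leq_addr addKn.
have -> : (2 * (j + n) - 2 * j = n + n)%N by lia.
by rewrite -!(mulrA (q ^+ _)) !qpoch_qprod !qpoch_qq !qpoch_qprod0 /phi_jn !mulrA.
Qed.

(* [phi_jn j n.+1] with the top factors [1 - q^(i+n+1) b kappa] and [1 - q^(n+j+1) kappa] of
   its kappa-products replaced by a rational factor. *)
Definition cert_jn j n : F :=
  let i := (j + n)%N in
  a ^+ j * (qprod q 1 1 i.+2 / (qprod q 1 1 j.+1 * qprod q 1 1 n.+2))
  * (qprod q (b / a) 0 j * qprod q a 0 n.+1 / qprod q b 0 i.+1)
  * (qprod q (b * k) i.+1 (i.+1 + n) * qprod q k n.+2 (n.+1 + j)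
     / (qprod q (a * k) n.+1 (n.+1 + n.+1) * qprod q (a * k) (n + n).+3 ((n + n).+3 + j)))
  * (- q ^+ n.+1 * (1 - q ^+ j) / (1 - q ^+ i.+1))
  * (1 - (q ^+ i.+1 + q ^+ n.+1 - 1) * k - q ^+ i * (b * k) - q ^+ n.+1 * (a * k)
     + q ^+ (i + i + n).+2 * (b * k ^+ 2) + q ^+ (i + n + n).+3 * (a * k ^+ 2)
     + (q ^+ (i + n + n).+2 + q ^+ (i + i + n).+2 - q ^+ (i + i + n + n).+3) * (a * b * k ^+ 2)
     - q ^+ (i + i + n + n).+3 * (a * b * k ^+ 3))
  / (1 - q ^+ (n + n).+2 * (a * k)).

Lemma wz_interior s n : generic (s + n).+3 ->
  phi_jn s.+1 n.+2 - phi_jn s.+1 n.+1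
  = cert_jn s.+2 n - cert_jn s.+1 n.+1.
Proof.
move=> gen.
rewrite /phi_jn /cert_jn /= !addSn !addnS.
rewrite [qprod q 1 1 (s + n).+4]qprodSr // [qprod q 1 1 s.+3]qprodSr //.
rewrite [qprod q 1 1 n.+3]qprodSr // [qprod q (b / a) 0 s.+2]qprodSr //.
rewrite [qprod q a 0 n.+2]qprodSr // [qprod q b 0 (s + n).+3]qprodSr //.
rewrite [qprod q (b * k) (s + n).+3 ((s + n).+2 + n).+3]qprodSr2; last lia.
rewrite [qprod q (b * k) (s + n).+2 ((s + n).+1 + n).+2]qprodSl; last lia.
rewrite [qprod q (b * k) (s + n).+3 ((s + n).+1 + n).+3]qprodSr; last lia.
rewrite [qprod q k n.+3 (n + s).+4]qprodSr; last lia.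
rewrite [qprod q k n.+2 (n + s).+3]qprodSl; last lia.
rewrite [qprod q (a * k) n.+1 (n + n).+2]qprodSl; last lia.
rewrite [qprod q (a * k) n.+2 (n + n).+4]qprodSr2; last lia.
rewrite [qprod q (a * k) (n + n).+3 (n + n + s).+1.+4]qprodSr; last lia.
case/and4P: gen => a0 /qprod_neq0P Hq /qprod_neq0P Hb /qprod_neq0P Hak.
have nA : qprod q 1 1 (s + n).+3 != 0 by qprod_neq0_from Hq.
have nB : qprod q 1 1 s.+2 != 0 by qprod_neq0_from Hq.
have nC : qprod q 1 1 n.+2 != 0 by qprod_neq0_from Hq.
have nBb : qprod q b 0 (s + n).+2 != 0 by qprod_neq0_from Hb.
have nU : qprod q (a * k) n.+2 (n + n).+2 != 0 by qprod_neq0_from Hak.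
have nW : qprod q (a * k) (n + n).+3 (n + n + s).+4 != 0 by qprod_neq0_from Hak.
have n1 : 1 - q ^+ (s + n).+3 * 1 != 0 by qprod_neq0_from Hq.
have n2 : 1 - q ^+ s.+2 * 1 != 0 by qprod_neq0_from Hq.
have n3 : 1 - q ^+ n.+2 * 1 != 0 by qprod_neq0_from Hq.
have n4 : 1 - q ^+ (s + n).+2 * b != 0 by qprod_neq0_from Hb.
have n5 : 1 - q ^+ n.+1 * (a * k) != 0 by qprod_neq0_from Hak.
have n6 : 1 - q ^+ (n + n).+2 * (a * k) != 0 by qprod_neq0_from Hak.
have n7 : 1 - q ^+ (n + n).+3 * (a * k) != 0 by qprod_neq0_from Hak.
have n8 : 1 - q ^+ (n + n).+4 * (a * k) != 0 by qprod_neq0_from Hak.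
have n9 : 1 - q ^+ (n + n + s).+4 * (a * k) != 0 by qprod_neq0_from Hak.
have n10 : 1 - q ^+ (n + n + s).+4.+1 * (a * k) != 0 by qprod_neq0_from Hak.
rewrite (qprod_shift2 (mulf_neq0 n7 n8)); last by clear -s n; lia.
rewrite !exprS !exprD in n1 n2 n3 n4 n5 n6 n7 n8 n9 n10 *.
rewrite !mulr1 in n1 n2 n3.
field.
by rewrite ?a0 ?nA ?nB ?nC ?nBb ?nU ?nW ?n1 ?n2 ?n3 ?n4 ?n5 ?n6 ?n7 ?n8 ?n9 ?n10.
Qed.

Lemma wz_left n : generic n.+2 ->
  phi_jn 0 n.+2 - phi_jn 0 n.+1 = cert_jn 1 n.
Proof.
move=> gen.
rewrite /phi_jn /cert_jn /= !addSn !addnS !add0n !addn0 !qprodnn.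
rewrite [qprod q 1 1 n.+3]qprodSr // qprod1 qprod1.
rewrite [qprod q a 0 n.+2]qprodSr // [qprod q b 0 n.+2]qprodSr //.
rewrite [qprod q (b * k) n.+2 (n + n).+4]qprodSr2; last lia.
rewrite [qprod q (b * k) n.+1 (n + n).+2]qprodSl; last lia.
rewrite [qprod q (a * k) n.+2 (n + n).+4]qprodSr2; last lia.
rewrite [qprod q (a * k) n.+1 (n + n).+2]qprodSl; last lia.
rewrite qprod1.
case/and4P: gen => a0 /qprod_neq0P Hq /qprod_neq0P Hb /qprod_neq0P Hak.
have nC : qprod q 1 1 n.+2 != 0 by qprod_neq0_from Hq.
have n1 : 1 - q ^+ n.+2 * 1 != 0 by qprod_neq0_from Hq.
have n2 : 1 - q ^+ 1 * 1 != 0 by qprod_neq0_from Hq.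
have nBb : qprod q b 0 n.+1 != 0 by qprod_neq0_from Hb.
have n3 : 1 - q ^+ n.+1 * b != 0 by qprod_neq0_from Hb.
have nU : qprod q (a * k) n.+2 (n + n).+2 != 0 by qprod_neq0_from Hak.
have n4 : 1 - q ^+ n.+1 * (a * k) != 0 by qprod_neq0_from Hak.
have n5 : 1 - q ^+ (n + n).+2 * (a * k) != 0 by qprod_neq0_from Hak.
have n6 : 1 - q ^+ (n + n).+3 * (a * k) != 0 by qprod_neq0_from Hak.
rewrite !exprS !exprD ?expr0 in n1 n2 n3 n4 n5 n6 *.
rewrite !mulr1 in n1 n2.
field.
by rewrite ?a0 ?nC ?nBb ?nU ?n1 ?n2 ?n3 ?n4 ?n5 ?n6.
Qed.

Lemma wz_diag s : generic s.+2 ->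
  phi_jn s.+1 1 - phi_jn s.+1 0 = - phi_jn s.+2 0 - cert_jn s.+1 0.
Proof.
move=> gen.
rewrite /phi_jn /cert_jn /= !addSn !addnS !add0n !addn0 !qprodnn.
rewrite [qprod q 1 1 s.+3]qprodSr // [qprod q (b / a) 0 s.+2]qprodSr //.
rewrite [qprod q b 0 s.+2]qprodSr // [qprod q k 1 s.+3]qprodSl //.
rewrite [qprod q k 2 s.+3]qprodSr // [qprod q k 1 s.+2]qprodSl //.
rewrite [qprod q (a * k) 1 s.+3]qprodSr // !qprod1.
case/and4P: gen => a0 /qprod_neq0P Hq /qprod_neq0P Hb /qprod_neq0P Hak.
have nB : qprod q 1 1 s.+2 != 0 by qprod_neq0_from Hq.
have n1 : 1 - q ^+ s.+2 * 1 != 0 by qprod_neq0_from Hq.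
have n2 : 1 - q ^+ 1 * 1 != 0 by qprod_neq0_from Hq.
have nBb : qprod q b 0 s.+1 != 0 by qprod_neq0_from Hb.
have n3 : 1 - q ^+ s.+1 * b != 0 by qprod_neq0_from Hb.
have nV : qprod q (a * k) 1 s.+2 != 0 by qprod_neq0_from Hak.
have n4 : 1 - q ^+ 1 * (a * k) != 0 by qprod_neq0_from Hak.
have n5 : 1 - q ^+ 2 * (a * k) != 0 by qprod_neq0_from Hak.
have n6 : 1 - q ^+ s.+2 * (a * k) != 0 by qprod_neq0_from Hak.
have n7 : 1 - q ^+ s.+3 * (a * k) != 0 by qprod_neq0_from Hak.
rewrite (qprod_shift2 (mulf_neq0 n4 n5)) //.
rewrite !exprS !exprD ?expr0 in n1 n2 n3 n4 n5 n6 n7 *.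
rewrite ?mulr1 in n1 n2 n4 n5.
field.
by rewrite ?a0 ?nB ?nBb ?nV ?n1 ?n2 ?n3 ?n4 ?n5 ?n6 ?n7.
Qed.

Lemma wz_origin : generic 1 -> phi_jn 0 1 - phi_jn 0 0 = - phi_jn 1 0.
Proof.
move=> gen.
rewrite /phi_jn /= !addn0 !add0n !addn1 !qprodnn !qprod1.
case/and4P: gen => a0 /qprod_neq0P Hq /qprod_neq0P Hb /qprod_neq0P Hak.
have n1 : 1 - q ^+ 0 * b != 0 by qprod_neq0_from Hb.
have n2 : 1 - q ^+ 1 * 1 != 0 by qprod_neq0_from Hq.
have n3 : 1 - q ^+ 1 * (a * k) != 0 by qprod_neq0_from Hak.
rewrite ?expr0 ?expr1 ?mul1r ?mulr1 in n1 n2 n3 *.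
field.
by rewrite ?a0 ?n1 ?n2 ?n3 ?oner_neq0.
Qed.

Definition cert i j : F :=
  if j == 0%N then 0 else if j == i.+1 then - phi_jn i.+1 0
  else cert_jn j (i - j).

Lemma cert_succ i : cert i i.+1 = - phi_jn i.+1 0.
Proof. by rewrite /cert eqxx. Qed.

Lemma cert_mid i j : (0 < j <= i)%N -> cert i j = cert_jn j (i - j).
Proof. by case/andP=> j_gt0 le_ji; rewrite /cert gtn_eqF // ltn_eqF. Qed.

Lemma phi_succ_sub i j : generic i.+1 -> (j <= i)%N ->
  phi q a b k j i.+1 - phi q a b k j i = cert i j.+1 - cert i j.
Proof.
move=> gen /subnKC def_i; rewrite -{}def_i in gen *; rewrite -addnS !phi_jnE.
move: (i - j)%N gen => m; case: j => [|s]; case: m => [|n] gen.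
- by rewrite cert_succ subr0 (wz_origin gen).
- by rewrite cert_mid // subr0 add0n subSS subn0 (wz_left gen).
- rewrite addn0 in gen *.
  by rewrite cert_succ cert_mid ?leqnn // subnn (wz_diag gen).
- rewrite addnS in gen; rewrite !cert_mid; try lia.
  have -> : (s.+1 + n.+1 - s.+2 = n)%N by lia.
  by rewrite addKn (wz_interior gen).
Qed.

Lemma sum_phi i : generic i -> \sum_(0 <= j < i.+1) phi q a b k j i = 1.
Proof.
elim: i => [|i IHi] gen.
  by rewrite big_nat1 (phi_jnE 0 0) /phi_jn !qprodnn expr0 !(mul1r, invr1).
have telescope : \sum_(0 <= j < i.+1) (phi q a b k j i.+1 - phi q a b k j i)
    = - phi_jn i.+1 0.
  rewrite (@telescope_sumr_eq _ _ _ (cert i)) // => [|j /andP[_ le_ji]].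
    by rewrite cert_succ subr0.
  exact: phi_succ_sub.
have diag : phi q a b k i.+1 i.+1 = phi_jn i.+1 0 by rewrite -phi_jnE addn0.
rewrite big_nat_recr //= -[X in X + _](subrK (\sum_(0 <= j < i.+1) phi q a b k j i)).
by rewrite -sumrB telescope (IHi (genericW gen)) diag addrAC addNr add0r.
Qed.

End PhiSum.

Theorem mainTheorem6 (C : numClosedFieldType) (i : nat) (q a b kappa : C) :
  a != 0 ->
  qpoch b q i != 0 ->
  (forall j : nat, (j <= i)%N ->
     [/\ qpoch q q j != 0,
         qpoch (q ^+ (i - j) * a * kappa) q (i - j) != 0
       & qpoch (q ^+ (2 * i - 2 * j).+1 * a * kappa) q j != 0]) ->
  \sum_(0 <= j < i.+1) phi q a b kappa j i = 1.
Proof.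
move=> a_neq0 qpoch_b_neq0 hyp_j.
have [qpoch_q_neq0 _ low] := hyp_j i (leqnn i).
have [_ high _] := hyp_j 0%N (leq0n i).
rewrite subnn -mulrA qpoch_qprod in low; move/qprod_neq0P: low => low.
rewrite subn0 -mulrA qpoch_qprod in high; move/qprod_neq0P: high => high.
apply: sum_phi; apply/and4P; split=> //.
- by rewrite -qpoch_qq.
- by rewrite -qpoch_qprod0.
apply/qprod_neq0P => r r_in.
by have [r_le | r_gt] := leqP r i; [apply: low | apply: high]; lia.
Qed.
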